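(* Let $A$ be associative and let $f,g\in\mathcal{S}(\Omega)$. If $x\in\Omega$ is real and $x\in V(f)\cup V(g)$, then $x\in V(f\cdot g)$. More generally: (1) If $\mathbb{S}_x\subseteq V(f)$ or $\mathbb{S}_x\subseteq V(g)$, then $\mathbb{S}_x\subseteq V(f\cdot g)$. If $x\in\Omega\setminus\mathbb{R}$ and $f'_s(x)$, $g'_s(x)$ and $(f\cdot g)'_s(x)$ belong to $C_A$, then: (2) If $\mathbb{S}_x\cap V(f)=\{y\}$ and $\mathbb{S}_x\cap V(g)=\emptyset$, then $\mathbb{S}_x\cap V(f\cdot g)=\{y\}$. (3) If $\mathbb{S}_x\cap V(f)=\emptyset$ and $\mathbb{S}_x\cap V(g)=\{z\}$, then $f^c(z)\in C_A\setminus\{0\}$ and $\mathbb{S}_x\cap V(f\cdot g)=\{f^c(z)^{-1}zf^c(z)\}$. (4) If $\mathbb{S}_x\cap V(f)=\{y\}$ and $\mathbb{S}_x\cap V(g)=\{z\}$, then either (a) $\mathbb{S}_x\subseteq V(f\cdot g)$, or (b) $\mathbb{S}_x\cap V(f\cdot g)=\{y\}$, depending on whether or not $y^cf'_s(x)=f'_s(x)z$.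
   Context: Let $A$ be a finite-dimensional associative real algebra with unit $1$ ($\mathbb{R}$ identified with $\mathbb{R}1$), with a $^*$-involution $x\mapsto x^c$ (real linear, $(x^c)^c=x$, $(xy)^c=y^cx^c$, $r^c=r$ for $r\in\mathbb{R}$). Let $t(x)=x+x^c$, $n(x)=xx^c$. $C_A=\{0\}\cup\{a:n(a),n(a^c)$ are invertible elements of the center of $A\}$. $\mathbb{S}_A=\{J\in A:t(J)=0,n(J)=1\}$ (assumed non-empty), $Q_A=\mathbb{R}\cup\{x:t(x),n(x)\in\mathbb{R},4n(x)>t(x)^2\}$; every $x\in Q_A$ is $\alpha+\beta J$ with $\alpha,\beta\in\mathbb{R}$, $J\in\mathbb{S}_A$; $x^c=\alpha-\beta J$, $\mathrm{im}(x)=x-t(x)/2$, $\mathbb{S}_x=\{\alpha+\beta I:I\in\mathbb{S}_A\}$. Let $D\subseteq\mathbb{C}$ be non-empty, invariant under conjugation, $\Omega=\{\alpha+\beta J:\alpha+i\beta\in D,J\in\mathbb{S}_A\}$. $A_{\mathbb{C}}=\{a+\imath b\}$ with $(a+\imath b)(a'+\imath b')=aa'-bb'+\imath(ab'+ba')$, $\overline{a+\imath b}=a-\imath b$, $(a+\imath b)^c=a^c+\imath b^c$. A stem function $F=F_1+\imath F_2:D\to A_{\mathbb{C}}$ satisfies $F(\bar z)=\overline{F(z)}$ and induces the slice function $f=\mathcal{I}(F)$, $f(\alpha+\beta J)=F_1(\alpha+i\beta)+JF_2(\alpha+i\beta)$; $\mathcal{S}(\Omega)$ is the set of slice functions; slice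 product $f\cdot g=\mathcal{I}(FG)$; $f^c=\mathcal{I}(F^c)$ with $F^c(z)=F(z)^c$. $V(h)=\{x:h(x)=0\}$. $f'_s(x)=\frac12\mathrm{im}(x)^{-1}(f(x)-f(x^c))$ for $x\in\Omega\setminus\mathbb{R}$. *)

From HB Require Import structures.
From mathcomp Require Import all_boot all_order all_algebra.
From mathcomp Require Import falgebra.
From mathcomp Require Import reals.
From Stdlib Require Import ClassicalEpsilon.

Set Implicit Arguments.
Unset Strict Implicit.
Unset Printing Implicit Defensive.

Import GRing.Theory Num.Theory.
Local Open Scope ring_scope.

Section SliceDefs.
Variables (R : realType) (A : falgType R).

Definition is_involution (c : A -> A) : Prop :=
  [/\ (forall x y, c (x + y) = c x + c y),
      (forall (r : R) x, c (r *: x) = r *: c x),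
      (forall x, c (c x) = x),
      (forall x y, c (x * y) = c y * c x) &
      (forall r : R, c (r%:A) = r%:A)].

Variable c : A -> A.

Definition tr (x : A) : A := x + c x.
Definition nrm (x : A) : A := x * c x.

Definition central (z : A) : Prop := forall y : A, z * y = y * z.

Definition inC (a : A) : Prop :=
  a = 0 \/
  [/\ central (nrm a), nrm a \is a GRing.unit,
      central (nrm (c a)) & nrm (c a) \is a GRing.unit].

Definition inS (J : A) : Prop := tr J = 0 /\ nrm J = 1.

Definition is_real (x : A) : Prop := exists r : R, x = r%:A.

(* D is a subset of C, represented as a predicate on pairs (alpha, beta)
   standing for alpha + i beta. *)
Variable D : R * R -> Prop.

Definition conj_invariant : Prop := forall a b, D (a, b) -> D (a, - b).

Definition inOmega (x : A) : Prop :=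
  exists a b J, [/\ D (a, b), inS J & x = a%:A + b *: J].

Definition inSx (x y : A) : Prop :=
  exists a b J I, [/\ inS J, inS I, x = a%:A + b *: J & y = a%:A + b *: I].

(* A stem function F = F1 + i F2 : D -> A_C with F(conj z) = conj (F z). *)
Definition is_stem (F1 F2 : R -> R -> A) : Prop :=
  forall a b, D (a, b) -> F1 a (- b) = F1 a b /\ F2 a (- b) = - F2 a b.

(* The slice function I(F): f(alpha + beta J) = F1(alpha,beta) + J F2(alpha,beta)
   on Omega (value outside Omega irrelevant). *)
Definition rep_of (x : A) : R * R * A :=
  epsilon (inhabits (0, 0, 0))
    (fun p : R * R * A =>
       [/\ D (p.1.1, p.1.2), inS p.2 & x = p.1.1%:A + p.1.2 *: p.2]).

Definition sliceI (F1 F2 : R -> R -> A) (x : A) : A :=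
  let p := rep_of x in F1 p.1.1 p.1.2 + p.2 * F2 p.1.1 p.1.2.

(* Product of stem functions in A_C:
   (F1 + i F2)(G1 + i G2) = (F1 G1 - F2 G2) + i (F1 G2 + F2 G1) *)
Definition stem_mul1 (F1 F2 G1 G2 : R -> R -> A) : R -> R -> A :=
  fun a b => F1 a b * G1 a b - F2 a b * G2 a b.
Definition stem_mul2 (F1 F2 G1 G2 : R -> R -> A) : R -> R -> A :=
  fun a b => F1 a b * G2 a b + F2 a b * G1 a b.

Definition stem_c (F : R -> R -> A) : R -> R -> A := fun a b => c (F a b).

Definition inV (h : A -> A) (x : A) : Prop := inOmega x /\ h x = 0.

Definition im (x : A) : A := x - (2%:R^-1 : R) *: tr x.
Definition sderiv (h : A -> A) (x : A) : A :=
  (2%:R^-1 : R) *: ((im x)^-1 * (h x - h (c x))).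

End SliceDefs.

(* Write x = a + b J and let α, β, γ, δ be the values of F1, F2, G1, G2 at (a, b).
   On the sphere S_x one has f(a + b I) = α + I β and
   (f·g)(a + b I) = f(a + b I) γ + I f(a + b I) δ, so the zeros of f on S_x are zeros
   of f·g, and the zero of a slice function on S_x is unique as soon as its second stem
   component is invertible, which holds for nonzero elements of C_A (f'_s(x) = β / b).
   If g vanishes at z = a + b K while f has no zero on S_x, then with u = α - β K one gets
   (f·g)(a + b I) = (I u - u K) δ and f^c(z) = u^c; as u^c = u^-1 n(u) with n(u) central,
   the unique zero I = u K u^-1 is f^c(z)^-1 K f^c(z). In case (4) the second stem
   component of f·g is -(I1 β + β K) δ, while b (y^c f'_s(x) - f'_s(x) z) = -(I1 β + β K). *)

From HB Require Import structures.
From mathcomp Require Import all_boot all_order all_algebra.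
From mathcomp Require Import falgebra.
From mathcomp Require Import reals lra.
From Stdlib Require Import ClassicalEpsilon.
Import GRing.Theory Num.Theory.
Local Open Scope ring_scope.
Set Implicit Arguments.
Unset Strict Implicit.
Unset Printing Implicit Defensive.

Lemma invr_two_sided (A : unitRingType) (x y : A) :
  y * x = 1 -> x * y = 1 -> x^-1 = y.
Proof.
move=> yx1 xy1; have xU : x \is a GRing.unit by apply/unitrP; exists y.
by rewrite -[y]mul1r -(mulVr xU) -mulrA xy1 mulr1.
Qed.

Lemma eq_oppr_eq0 (R : numFieldType) (V : lmodType R) (x : V) : x = - x -> x = 0.
Proof.
move=> xN; have /eqP : 2%:R *: x = 0 :> V by rewrite scaler_nat mulr2n {1}xN addNr.
by rewrite scaler_eq0 pnatr_eq0 => /eqP.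
Qed.

Lemma scalar_inj (R : fieldType) (A : lalgType R) : injective (fun r : R => r%:A : A).
Proof.
move=> r s /eqP; rewrite -subr_eq0 -scalerBl scaler_eq0 oner_eq0 orbF subr_eq0.
by move/eqP.
Qed.

Lemma unitrZ (R : fieldType) (A : unitAlgType R) (k : R) (u : A) :
  k != 0 -> u \is a GRing.unit -> k *: u \is a GRing.unit.
Proof.
move=> kn0 uU; apply/unitrP; exists (k^-1 *: u^-1).
by rewrite -!scalerAl -!scalerAr !scalerA mulVf // mulfV // mulVr // mulrV // scale1r.
Qed.

Section Central.
Variables (R : realType) (A : falgType R).
Implicit Types u v : A.

Lemma centralM u v : central u -> central v -> central (u * v).
Proof. by move=> Hu Hv y; rewrite -mulrA Hv mulrA Hu mulrA. Qed.

Lemma centralV u : central u -> u \is a GRing.unit -> central u^-1.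
Proof.
move=> Hu uU y; apply: (mulrI uU); rewrite mulrA mulrV // mul1r mulrA Hu.
by rewrite -mulrA mulrV // mulr1.
Qed.

Lemma centralZ (k : R) u : central u -> central (k *: u).
Proof. by move=> Hu y; rewrite -scalerAl Hu scalerAr. Qed.

End Central.

Section Involution.
Variables (R : realType) (A : falgType R) (c : A -> A) (D : R * R -> Prop).
Hypothesis Hc : is_involution c.
Implicit Types u v : A.

Lemma cD x y : c (x + y) = c x + c y. Proof. by case: Hc. Qed.
Lemma cZ (r : R) x : c (r *: x) = r *: c x. Proof. by case: Hc. Qed.
Lemma cK x : c (c x) = x. Proof. by case: Hc. Qed.
Lemma cM x y : c (x * y) = c y * c x. Proof. by case: Hc. Qed.
Lemma c_alg (r : R) : c r%:A = r%:A. Proof. by case: Hc. Qed.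
Lemma c0 : c 0 = 0. Proof. by rewrite -(scale0r 0) cZ !scale0r. Qed.
Lemma c1 : c 1 = 1. Proof. by have := c_alg 1; rewrite scale1r. Qed.
Lemma cN x : c (- x) = - c x. Proof. by rewrite -scaleN1r cZ scaleN1r. Qed.
Lemma cB x y : c (x - y) = c x - c y. Proof. by rewrite cD cN. Qed.


Lemma c_inv u : u \is a GRing.unit -> c u^-1 = (c u)^-1.
Proof. by move=> uU; apply/esym/invr_two_sided; rewrite -cM ?mulrV ?mulVr ?c1. Qed.



Section Sphere.
Variable J : A.
Hypothesis HJ : inS c J.

Lemma inS_c : c J = - J.
Proof. by case: HJ => /eqP; rewrite /tr addrC addr_eq0 => /eqP. Qed.

Lemma inS_mulrr : J * J = -1.
Proof. by case: HJ => _; rewrite /nrm inS_c mulrN => /eqP; rewrite eqr_oppLR => /eqP. Qed.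

Lemma inSN : inS c (- J).
Proof. by split; rewrite /tr /nrm cN inS_c opprK ?mulNr ?inS_mulrr ?opprK // addrC subrr. Qed.

Lemma inS_unit : J \is a GRing.unit.
Proof. by apply/unitrP; exists (- J); rewrite mulrN mulNr inS_mulrr opprK. Qed.

Lemma inS_neq0 : J != 0.
Proof.
apply/eqP => J0; have /eqP := inS_mulrr.
by rewrite J0 mulr0 eq_sym oppr_eq0 oner_eq0.
Qed.

Lemma inS_inv : J^-1 = - J.
Proof. by apply: invr_two_sided; rewrite ?mulNr ?mulrN inS_mulrr opprK. Qed.

Lemma c_sphere (a b : R) : c (a%:A + b *: J) = a%:A + b *: - J.
Proof. by rewrite cD c_alg cZ inS_c. Qed.

Lemma im_sphere (a b : R) : im c (a%:A + b *: J) = b *: J.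
Proof.
rewrite /im /tr c_sphere scalerN addrACA subrr addr0 -scalerDl scalerA.
have -> : 2%:R^-1 * (a + a) = a by lra.
by rewrite addrAC subrr add0r.
Qed.

End Sphere.

Lemma sphere_rep_unique a b J a' b' K : inS c J -> inS c K ->
  a%:A + b *: J = a'%:A + b' *: K ->
  a' = a /\ [\/ b' = b /\ K = J, b' = - b /\ K = - J | b = 0 /\ b' = 0].
Proof.
move=> HJ HK E.
have Ec : a%:A - b *: J = a'%:A - b' *: K.
  by have := congr1 c E; rewrite !c_sphere // !scalerN.
have Ea : a' = a.
  have := congr2 +%R E Ec; rewrite [LHS]addrACA [RHS]addrACA !subrr !addr0 -!scalerDl.
  by move/scalar_inj; lra.
subst a'; split => //; move/addrI: E => E.
have Ebb : b * b = b' * b'.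
  have := congr2 *%R E E; rewrite -!scalerAl -!scalerAr !scalerA !inS_mulrr //.
  by rewrite !scalerN => /oppr_inj; rewrite -!/(_ %:A) => /scalar_inj.
have [b0|bn0] := eqVneq b 0.
  constructor 3; split => //; move: Ebb; rewrite b0 mulr0 => /esym/eqP.
  by rewrite mulf_eq0 orbb => /eqP.
have : b' ^+ 2 == b ^+ 2 by rewrite !expr2 Ebb.
rewrite eqf_sqr => /orP [] /eqP Eb'; subst b'.
  by constructor 1; split => //; apply: (scalerI bn0); rewrite E.
constructor 2; split => //; apply: (scalerI bn0).
by rewrite scalerN E scaleNr opprK.
Qed.

Lemma inSx_sphere a b J w : inS c J ->
  inSx c (a%:A + b *: J) w <-> exists2 I, inS c I & w = a%:A + b *: I.
Proof.
move=> HJ; split; last by move=> [I HI ->]; exists a, b, J, I.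
move=> [a' [b' [J' [I [HJ' HI Ex ->]]]]].
have [-> [[-> _]|[-> _]|[-> ->]]] := sphere_rep_unique HJ HJ' Ex.
- by exists I.
- by exists (- I); [apply: inSN | rewrite scaleNr scalerN].
- by exists J => //; rewrite !scale0r.
Qed.






Lemma nrm_c u : nrm c (c u) = c u * u.
Proof. by rewrite /nrm cK. Qed.

Lemma inCZ (k : R) u : inC c u -> inC c (k *: u).
Proof.
have nrmZ v : nrm c (k *: v) = (k * k) *: nrm c v.
  by rewrite /nrm cZ -scalerAl -scalerAr scalerA.
have [->|kn0] := eqVneq k 0; first by rewrite scale0r; left.
case=> [->|[H1 H2 H3 H4]]; first by rewrite scaler0; left.
right; rewrite nrmZ cZ nrmZ; split; try exact: centralZ;
  by apply: unitrZ; rewrite ?mulf_neq0.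
Qed.

Lemma inC_unscale (k : R) u : k != 0 -> inC c (k *: u) -> inC c u.
Proof. by move=> kn0 /(inCZ k^-1); rewrite scalerA mulVf // scale1r. Qed.

(* u^c n(u)^-1 is a right inverse and n(u^c)^-1 u^c a left inverse of u. *)
Lemma inC_unit u : inC c u -> u != 0 -> u \is a GRing.unit.
Proof.
case=> [->|[_ nU _ ncU]]; first by rewrite eqxx.
move=> _; apply/unitrP; exists (c u * (nrm c u)^-1).
have linv : ((nrm c (c u))^-1 * c u) * u = 1 by rewrite -mulrA -nrm_c mulVr.
have rinv : u * (c u * (nrm c u)^-1) = 1 by rewrite mulrA mulrV.
have Ey : c u * (nrm c u)^-1 = (nrm c (c u))^-1 * c u.
  by rewrite -[LHS]mul1r -linv -!mulrA rinv mulr1.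
by split; rewrite // Ey.
Qed.

Lemma inC_c u : inC c u -> inC c (c u).
Proof. by case=> [->|[H1 H2 H3 H4]]; [left; rewrite c0 | right; rewrite cK]. Qed.

Lemma inC_cunit u : inC c u -> u \is a GRing.unit -> c u \is a GRing.unit.
Proof.
move=> Hu uU; apply: inC_unit; first exact: inC_c.
by apply: contraTneq uU => /(congr1 c); rewrite cK c0 => ->; rewrite unitr0.
Qed.

Lemma inCM u v : inC c u -> inC c v -> inC c (u * v).
Proof.
case=> [->|[H1 H2 H3 H4]]; first by rewrite mul0r; left.
case=> [->|[H5 H6 H7 H8]]; first by rewrite mulr0; left.
have nrmM : nrm c (u * v) = nrm c v * nrm c u.
  by rewrite /nrm cM mulrA -(mulrA u) -/(nrm c v) -H5 -mulrA.
have nrm_cM : nrm c (c (u * v)) = nrm c (c u) * nrm c (c v).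
  have -> : nrm c (c (u * v)) = c v * nrm c (c u) * v by rewrite !nrm_c cM !mulrA.
  by rewrite -mulrA H3 mulrA -nrm_c; apply: esym (H3 _).
by right; rewrite nrmM nrm_cM; split; try exact: centralM; rewrite unitrMl.
Qed.

Lemma inCV u : inC c u -> inC c u^-1.
Proof.
move=> Hu; have [->|un0] := eqVneq u 0; first by rewrite invr0; left.
have uU := inC_unit Hu un0; have cuU := inC_cunit Hu uU.
case: Hu => [u0|[H1 H2 H3 H4]]; first by rewrite u0 eqxx in un0.
have nrmV : nrm c u^-1 = (nrm c (c u))^-1 by rewrite /nrm c_inv // cK invrM.
have nrm_cV : nrm c (c u^-1) = (nrm c u)^-1 by rewrite /nrm cK c_inv // invrM.
by right; rewrite nrmV nrm_cV; split; try exact: centralV; rewrite unitrV.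
Qed.

(* Since u^c = u^-1 n(u) with n(u) central, conjugation by u^-1 and by u^c agree. *)
Lemma c_conj u X : inC c u -> u \is a GRing.unit ->
  c u * X = (u^-1 * X * u) * c u.
Proof.
case=> [u0|[H1 _ _ _]] uU; first by move: uU; rewrite u0 unitr0.
have E : c u = u^-1 * nrm c u by rewrite /nrm mulKr.
by rewrite {1}E -(mulrA u^-1 (nrm c u)) H1 /nrm !mulrA.
Qed.

Lemma inS_conj u K : inC c u -> u \is a GRing.unit -> inS c K ->
  inS c (u^-1 * K * u).
Proof.
move=> Hu uU HK; have cuU := inC_cunit Hu uU.
have Ec : c (u^-1 * K * u) = - (u^-1 * K * u).
  rewrite !cM c_inv // (inS_c HK) mulrA c_conj // mulrK //.
  by rewrite mulrN mulNr.
split; first by rewrite /tr Ec subrr.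
rewrite /nrm Ec mulrN -!mulrA (mulrA u) mulrV // mul1r (mulrA K) inS_mulrr //.
by rewrite mulN1r mulrN mulVr // opprK.
Qed.

Lemma inS_conjV u K : inC c u -> u \is a GRing.unit -> inS c K ->
  inS c (u * K * u^-1).
Proof.
by move=> Hu uU /(inS_conj (inCV Hu)); rewrite invrK; apply; rewrite unitrV.
Qed.


Section Stem.
Variables F1 F2 : R -> R -> A.
Hypothesis HF : is_stem D F1 F2.
Local Notation f := (sliceI c D F1 F2).

Lemma stem_real a : D (a, 0) -> F2 a 0 = 0.
Proof. by move=> Da; have [_] := HF Da; rewrite oppr0 => /eq_oppr_eq0. Qed.

Lemma sliceI_sphere a b J : D (a, b) -> inS c J ->
  f (a%:A + b *: J) = F1 a b + J * F2 a b.
Proof.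
move=> Dab HJ; rewrite /sliceI /rep_of.
set P := fun p : R * R * A =>
  [/\ D (p.1.1, p.1.2), inS c p.2 & a%:A + b *: J = p.1.1%:A + p.1.2 *: p.2].
have : P (epsilon (inhabits (0, 0, 0)) P) by apply: epsilon_spec; exists (a, b, J).
move: (epsilon _ P) => [[a' b'] K] [/= _ HK E].
have [-> [[-> ->]|[-> ->]|[b0 b'0]]] := sphere_rep_unique HJ HK E => //.
  by have [-> ->] := HF Dab; rewrite mulrNN.
by subst; rewrite stem_real // !mulr0.
Qed.

Lemma sderiv_sphere a b J : D (a, b) -> inS c J -> b != 0 ->
  sderiv c f (a%:A + b *: J) = b^-1 *: F2 a b.
Proof.
move=> Dab HJ bn0; have HJN := inSN HJ.
rewrite /sderiv c_sphere // !sliceI_sphere // im_sphere //.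
rewrite invrZ ?unitfE ?inS_unit // inS_inv // mulNr opprD opprK addrACA subrr add0r.
rewrite -scalerAl mulNr mulrDr !mulrA inS_mulrr // mulN1r -opprD opprK -mulr2n.
by rewrite -scaler_nat !scalerA mulrAC mulVf ?mul1r // pnatr_eq0.
Qed.

Lemma sphere_zeroP a b J w : D (a, b) -> inS c J ->
  inSx c (a%:A + b *: J) w /\ inV c D f w <->
  exists2 I, inS c I & w = a%:A + b *: I /\ F1 a b + I * F2 a b = 0.
Proof.
move=> Dab HJ; split.
  by move=> [/(inSx_sphere _ _ _ HJ) [I HI ->] [_]]; rewrite sliceI_sphere // => ?; exists I.
move=> [I HI [-> fI0]]; split; first by apply/(inSx_sphere _ _ _ HJ); exists I.
by split; [exists a, b, I | rewrite sliceI_sphere].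
Qed.

Lemma sphere_zero_unit a b J I0 : D (a, b) -> inS c J -> inS c I0 ->
  F2 a b \is a GRing.unit -> F1 a b + I0 * F2 a b = 0 ->
  forall w, inSx c (a%:A + b *: J) w /\ inV c D f w <-> w = a%:A + b *: I0.
Proof.
move=> Dab HJ HI0 bU fI00 w; rewrite sphere_zeroP //; split; last by move->; exists I0.
by move=> [I _ [-> fI0]]; move: fI0; rewrite -fI00 => /addrI/(mulIr bU) ->.
Qed.

Lemma sphere_zero_single a b J y : D (a, b) -> inS c J -> b != 0 ->
  (forall w, inSx c (a%:A + b *: J) w /\ inV c D f w <-> w = y) ->
  F2 a b != 0 /\ exists2 I, inS c I & y = a%:A + b *: I /\ F1 a b + I * F2 a b = 0.
Proof.
move=> Dab HJ bn0 Hy.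
have [I HI [Ey fI0]] : exists2 I, inS c I & y = a%:A + b *: I /\ F1 a b + I * F2 a b = 0.
  by apply/(sphere_zeroP _ Dab HJ)/Hy.
split; last by exists I.
apply/eqP => F20; move: fI0; rewrite F20 mulr0 addr0 => F10.
have : a%:A + b *: - I = y.
  by apply/Hy/(sphere_zeroP _ Dab HJ); exists (- I); [exact: inSN | by rewrite F10 F20 mulr0 addr0].
rewrite Ey => /addrI/(scalerI bn0) NII.
by move: (inS_neq0 HI); rewrite (eq_oppr_eq0 (esym NII)) eqxx.
Qed.

(* Evaluating at the antipodal points a + b I and a - b I separates F1 and F2. *)
Lemma sphere_zero_all a b J : D (a, b) -> inS c J ->
  (forall w, inSx c (a%:A + b *: J) w -> inV c D f w) -> F1 a b = 0 /\ F2 a b = 0.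
Proof.
move=> Dab HJ Hall.
have zero_at I : inS c I -> F1 a b + I * F2 a b = 0.
  move=> HI; have /Hall[_] : inSx c (a%:A + b *: J) (a%:A + b *: I) by exists a, b, J, I.
  by rewrite sliceI_sphere.
have fJ := zero_at _ HJ; have fNJ := zero_at _ (inSN HJ).
have F10 : F1 a b = 0.
  apply: eq_oppr_eq0; apply/eqP; rewrite -addr_eq0; apply/eqP.
  by move: (congr2 +%R fJ fNJ); rewrite mulNr addrACA subrr !addr0.
split => //; move: fJ; rewrite F10 add0r => JF20.
by apply: (mulrI (inS_unit HJ)); rewrite JF20 mulr0.
Qed.

End Stem.

Lemma stem_mul (F1 F2 G1 G2 : R -> R -> A) : is_stem D F1 F2 -> is_stem D G1 G2 ->
  is_stem D (stem_mul1 F1 F2 G1 G2) (stem_mul2 F1 F2 G1 G2).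
Proof.
move=> HF HG a b Dab; rewrite /stem_mul1 /stem_mul2.
by have [-> ->] := HF a b Dab; have [-> ->] := HG a b Dab; rewrite mulrNN mulrN mulNr opprD.
Qed.

Lemma stem_conj (F1 F2 : R -> R -> A) : is_stem D F1 F2 -> is_stem D (stem_c c F1) (stem_c c F2).
Proof. by move=> HF a b Dab; have [E1 E2] := HF a b Dab; rewrite /stem_c E1 E2 cN. Qed.

Section Product.
Variables F1 F2 G1 G2 : R -> R -> A.
Hypotheses (HF : is_stem D F1 F2) (HG : is_stem D G1 G2).
Local Notation f := (sliceI c D F1 F2).
Local Notation g := (sliceI c D G1 G2).
Local Notation H1 := (stem_mul1 F1 F2 G1 G2).
Local Notation H2 := (stem_mul2 F1 F2 G1 G2).
Local Notation fg := (sliceI c D H1 H2).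
Local Notation fc := (sliceI c D (stem_c c F1) (stem_c c F2)).

Let HFG : is_stem D H1 H2 := stem_mul HF HG.

Lemma stem_mul_sphere a b I : inS c I ->
  H1 a b + I * H2 a b =
  (F1 a b + I * F2 a b) * G1 a b + I * (F1 a b + I * F2 a b) * G2 a b.
Proof.
move=> HI; rewrite /stem_mul1 /stem_mul2 mulrDr !mulrDl !mulrDr !mulrA inS_mulrr //.
by rewrite mulN1r mulrBl addrACA [RHS]addrACA [X in _ + X = _]addrC.
Qed.

Lemma mul_zero_real x : inOmega c D x -> is_real x ->
  inV c D f x \/ inV c D g x -> inV c D fg x.
Proof.
move=> Hx [r Er] Hfg; split => //; move: Hx => [a [b [J [Dab HJ Ex]]]].
have b0 : b = 0.
  have : a%:A + b *: J = r%:A + 0 *: J by rewrite -Ex Er scale0r addr0.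
  by case/(sphere_rep_unique HJ HJ) => _ [[<-]|[/esym/eqP]|[]] //; rewrite oppr_eq0 => /eqP.
subst b; rewrite Ex sliceI_sphere // /stem_mul1 /stem_mul2.
rewrite (stem_real HF) // (stem_real HG) // !(mulr0, mul0r, addr0, subr0).
case: Hfg => [] [_]; rewrite Ex sliceI_sphere // ?(stem_real HF) ?(stem_real HG) //.
  by rewrite mulr0 addr0 => ->; rewrite mul0r.
by rewrite mulr0 addr0 => ->; rewrite mulr0.
Qed.

Lemma mul_zero_sphere_all x : inOmega c D x ->
  (forall y, inSx c x y -> inV c D f y) \/ (forall y, inSx c x y -> inV c D g y) ->
  forall y, inSx c x y -> inV c D fg y.
Proof.
move=> [a [b [J [Dab HJ ->]]]] Hall y Hy.
have [I HI Ey] := (inSx_sphere _ _ _ HJ).1 Hy.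
split; first by exists a, b, I.
rewrite Ey sliceI_sphere // stem_mul_sphere //.
case: Hall => [/(sphere_zero_all HF Dab HJ)|/(sphere_zero_all HG Dab HJ)] [-> ->];
  by rewrite ?(mulr0, mul0r, addr0, add0r).
Qed.

Section NonReal.
Variables (a b : R) (J : A).
Hypotheses (Dab : D (a, b)) (HJ : inS c J) (bn0 : b != 0).
Hypotheses (HbC : inC c (F2 a b)) (HdC : inC c (G2 a b)) (HmC : inC c (H2 a b)).
Local Notation x := (a%:A + b *: J).

Lemma mul_zero_left y :
  (forall w, inSx c x w /\ inV c D f w <-> w = y) ->
  (forall w, ~ (inSx c x w /\ inV c D g w)) ->
  forall w, inSx c x w /\ inV c D fg w <-> w = y.
Proof.
move=> Hy Hg.
have [bn0' [I1 HI1 [-> fI1]]] := sphere_zero_single HF Dab HJ bn0 Hy.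
have fgI1 : H1 a b + I1 * H2 a b = 0 by rewrite stem_mul_sphere // fI1 mulr0 !mul0r addr0.
have bU := inC_unit HbC bn0'.
have F1E : F1 a b = - (I1 * F2 a b) by apply/eqP; rewrite -addr_eq0 fI1.
apply: (sphere_zero_unit HFG Dab HJ HI1 _ fgI1); apply: inC_unit => //.
rewrite /stem_mul2 F1E mulNr addrC subr_eq0 -mulrA; apply/eqP => m0.
(* otherwise g would vanish at a + b K *)
pose K := - ((F2 a b)^-1 * I1 * F2 a b).
apply: (Hg (a%:A + b *: K)); apply/(sphere_zeroP HG _ Dab HJ); exists K.
  exact/inSN/inS_conj.
by split => //; rewrite /K mulNr -!mulrA -m0 mulKr // subrr.
Qed.

Lemma mul_zero_right z :
  (forall w, ~ (inSx c x w /\ inV c D f w)) ->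
  (forall w, inSx c x w /\ inV c D g w <-> w = z) ->
  (inC c (fc z) /\ fc z <> 0) /\
  (forall w, inSx c x w /\ inV c D fg w <-> w = (fc z)^-1 * z * fc z).
Proof.
move=> Hf Hz.
have [dn0 [K HK [Ez gK]]] := sphere_zero_single HG Dab HJ bn0 Hz.
have dU := inC_unit HdC dn0.
have G1E : G1 a b = - (K * G2 a b) by apply/eqP; rewrite -addr_eq0 gK.
have f_neq0 I : inS c I -> F1 a b + I * F2 a b <> 0.
  by move=> HI fI; apply: (Hf (a%:A + b *: I)); apply/(sphere_zeroP HF _ Dab HJ); exists I.
pose u := F1 a b - F2 a b * K.
have H2E : H2 a b = u * G2 a b by rewrite /stem_mul2 G1E /u mulrBl mulrN mulrA.
have uC : inC c u by have := inCM HmC (inCV HdC); rewrite H2E mulrK.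
have un0 : u != 0.
  apply/eqP => u0; have F1E : F1 a b = F2 a b * K by apply/eqP; rewrite -subr_eq0 -/u u0.
  have [b0|bn0'] := eqVneq (F2 a b) 0.
    by apply: (f_neq0 J HJ); rewrite F1E b0 mul0r mulr0 addr0.
  have bU := inC_unit HbC bn0'.
  apply: (f_neq0 (- (F2 a b * K * (F2 a b)^-1))).
    exact/inSN/inS_conjV.
  by rewrite F1E mulNr divrK // subrr.
have uU := inC_unit uC un0; have cuU := inC_cunit uC uU.
have -> : fc z = c u.
  rewrite Ez (sliceI_sphere (stem_conj HF)) // /stem_c /u.
  by rewrite cB cM (inS_c HK) mulNr opprK.
split.
  split; first exact: inC_c uC.
  by move/(congr1 c); rewrite cK c0; apply/eqP.
have fgI I : H1 a b + I * H2 a b = (I * u - u * K) * G2 a b.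
  rewrite H2E /stem_mul1 G1E /u !mulrBl !mulrBr !mulrN !mulrA -(mulrA _ K K).
  by rewrite (inS_mulrr HK) mulrN1 mulNr mulrBl opprK opprD [RHS]addrC.
have conjK : u * K * u^-1 = (c u)^-1 * K * c u.
  apply: (mulrI cuU); rewrite c_conj // !mulrA mulVr // mul1r divrK //.
  by rewrite mulrV // mul1r.
have -> : (c u)^-1 * z * c u = a%:A + b *: (u * K * u^-1).
  rewrite Ez conjK mulrDr mulrDl -!scalerAr -!scalerAl mulr1 mulVr //.
apply: (sphere_zero_unit HFG Dab HJ).
- exact: inS_conjV.
- by rewrite H2E unitrMl.
- by rewrite fgI divrK // subrr mul0r.
Qed.

Lemma mul_zero_both y z :
  (forall w, inSx c x w /\ inV c D f w <-> w = y) ->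
  (forall w, inSx c x w /\ inV c D g w <-> w = z) ->
  (c y * sderiv c f x = sderiv c f x * z -> forall w, inSx c x w -> inV c D fg w) /\
  (c y * sderiv c f x <> sderiv c f x * z ->
     forall w, inSx c x w /\ inV c D fg w <-> w = y).
Proof.
move=> Hy Hz.
have [_ [I1 HI1 [Ey fI1]]] := sphere_zero_single HF Dab HJ bn0 Hy.
have [dn0 [K HK [Ez gK]]] := sphere_zero_single HG Dab HJ bn0 Hz.
have dU := inC_unit HdC dn0.
have F1E : F1 a b = - (I1 * F2 a b) by apply/eqP; rewrite -addr_eq0 fI1.
have G1E : G1 a b = - (K * G2 a b) by apply/eqP; rewrite -addr_eq0 gK.
pose e := I1 * F2 a b + F2 a b * K.
have H2E : H2 a b = - (e * G2 a b) by rewrite /stem_mul2 F1E G1E mulrN mulNr mulrDl opprD mulrA.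
have commE : c y * sderiv c f x - sderiv c f x * z = - e.
  rewrite Ey Ez (sderiv_sphere HF) // c_sphere // mulrDl mulrDr mulr_algl mulr_algr.
  rewrite -scalerAl -scalerAr -!scalerAr -scalerAl !scalerA mulfV // !scale1r.
  by rewrite mulNr opprD addrACA subrr add0r opprD.
have fgI1 : H1 a b + I1 * H2 a b = 0 by rewrite stem_mul_sphere // fI1 mulr0 !mul0r addr0.
split => [/eqP|/eqP neq].
  rewrite -subr_eq0 commE oppr_eq0 => /eqP e0 w Hw.
  have H20 : H2 a b = 0 by rewrite H2E e0 mul0r oppr0.
  have H10 : H1 a b = 0 by move: fgI1; rewrite H20 mulr0 addr0.
  have [I HI ->] := (inSx_sphere _ _ _ HJ).1 Hw.
  by split; [exists a, b, I | rewrite sliceI_sphere // H10 H20 mulr0 addr0].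
have en0 : e != 0 by apply: contraNneq neq => e0; rewrite -subr_eq0 commE e0 oppr0.
rewrite Ey; apply: (sphere_zero_unit HFG Dab HJ HI1 _ fgI1).
apply: inC_unit => //; rewrite H2E oppr_eq0; apply: contra en0.
by move=> /eqP eG0; apply/eqP/(mulIr dU); rewrite eG0 mul0r.
Qed.

End NonReal.

End Product.

End Involution.

Theorem theorem5p12 (R : realType) (A : falgType R) (c : A -> A)
  (D : R * R -> Prop)
  (Hc : is_involution c)
  (HDne : exists p, D p)
  (HDconj : conj_invariant D)
  (HSne : exists J, inS c J)
  (F1 F2 G1 G2 : R -> R -> A)
  (HF : is_stem D F1 F2) (HG : is_stem D G1 G2) :
  let f := sliceI c D F1 F2 in
  let g := sliceI c D G1 G2 in
  let fg := sliceI c D (stem_mul1 F1 F2 G1 G2) (stem_mul2 F1 F2 G1 G2) in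
  let fc := sliceI c D (stem_c c F1) (stem_c c F2) in
  [/\
   (* real points *)
   (forall x, inOmega c D x -> is_real x ->
      inV c D f x \/ inV c D g x -> inV c D fg x),
   (* (1) *)
   (forall x, inOmega c D x ->
      (forall y, inSx c x y -> inV c D f y) \/
      (forall y, inSx c x y -> inV c D g y) ->
      forall y, inSx c x y -> inV c D fg y) &
   (forall x, inOmega c D x -> ~ is_real x ->
      inC c (sderiv c f x) -> inC c (sderiv c g x) -> inC c (sderiv c fg x) ->
      [/\
       (* (2) *)
       (forall y,
          (forall w, inSx c x w /\ inV c D f w <-> w = y) ->
          (forall w, ~ (inSx c x w /\ inV c D g w)) ->
          forall w, inSx c x w /\ inV c D fg w <-> w = y),
       (* (3) *)
       (forall z,
          (forall w, ~ (inSx c x w /\ inV c D f w)) ->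
          (forall w, inSx c x w /\ inV c D g w <-> w = z) ->
          (inC c (fc z) /\ fc z <> 0) /\
          (forall w, inSx c x w /\ inV c D fg w <-> w = (fc z)^-1 * z * fc z)) &
       (* (4) *)
       (forall y z,
          (forall w, inSx c x w /\ inV c D f w <-> w = y) ->
          (forall w, inSx c x w /\ inV c D g w <-> w = z) ->
          (c y * sderiv c f x = sderiv c f x * z ->
             forall w, inSx c x w -> inV c D fg w) /\
          (c y * sderiv c f x <> sderiv c f x * z ->
             forall w, inSx c x w /\ inV c D fg w <-> w = y))])].
Proof.
move=> f g fg fc; rewrite {}/f {}/g {}/fg {}/fc.
split; [exact: mul_zero_real | exact: mul_zero_sphere_all |].
move=> _ [a [b [J [Dab HJ ->]]]] Hnr.
have bn0 : b != 0 by apply: contra_notN Hnr => /eqP b0; exists a; rewrite b0 scale0r addr0.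
have bVn0 : b^-1 != 0 by rewrite invr_eq0.
move=> Hf' Hg' Hfg'.
rewrite (sderiv_sphere Hc HF) // in Hf'; rewrite (sderiv_sphere Hc HG) // in Hg'.
rewrite (sderiv_sphere Hc (stem_mul HF HG)) // in Hfg'.
move: Hf' Hg' Hfg' => /(inC_unscale Hc bVn0) HbC /(inC_unscale Hc bVn0) HdC.
move=> /(inC_unscale Hc bVn0) HmC.
by split; [apply: mul_zero_left | apply: mul_zero_right | apply: mul_zero_both].
Qed.
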